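(* Let $n\ge 1$ and let $X_1,\dots,X_n$ be positive random variables that are jointly continuously distributed, such that each $X_k$ has an absolutely continuous distribution function $F_k$. Let $s>0$ and let $t=t(n,s)>0$ be the unique solution of $$\sum_{k=1}^n \int_0^{t} x\, dF_k(x) = s.$$ Let $N(n,s)$ and $S_{A(n,s)}$ be as defined in the context, and let $p_n=P(N(n,s)<n)$. Then $$\mathrm E(N(n,s)) \le p_n\left(\sum_{k=1}^n F_k(t) - \frac{s-\mathrm E(S_{A(n,s)})}{t}\right) + n(1-p_n).$$
   Context: Define a total order on $\{X_1,\dots,X_n\}$ by $X_i\prec X_j$ if either $X_i<X_j$, or $X_i=X_j$ and $i<j$. Let $\pi$ be the unique permutation of $\{1,\dots,n\}$ with $X_{\pi(1)}\prec X_{\pi(2)}\prec\cdots\prec X_{\pi(n)}$. Let $A(n,s)=\{\pi(1),\dots,\pi(k)\}$ where $k$ is the largest integer in $\{0,1,\dots,n\}$ with $X_{\pi(1)}+\cdots+X_{\pi(k)}\le s$ (so $A(n,s)=\emptyset$ if $X_{\pi(1)}>s$). Then $N(n,s)=|A(n,s)|$ is the maximum number of observations among $X_1,\dots,X_n$ whose sum does not exceed $s$, and $S_{A(n,s)}=\sum_{i\in A(n,s)} X_i$ (note $S_{A(n,s)}\le s$). *)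

From HB Require Import structures.
From mathcomp Require Import all_boot all_order all_algebra.
From mathcomp Require Import all_classical all_reals all_analysis.
Set Implicit Arguments. Unset Strict Implicit. Unset Printing Implicit Defensive.
Import Order.TTheory GRing.Theory Num.Theory.
Local Open Scope classical_set_scope.
Local Open Scope ring_scope.

Section Defs.
Context {d : measure_display} {T : measurableType d} {R : realType}
  {P : probability T R} {n : nat}.
Variable X : 'I_n -> {RV P >-> R}.

(* The total order X_i <= X_j (non-strict version of the paper's order
   "X_i < X_j, or X_i = X_j and i < j"); it is total and antisymmetric. *)
Definition prec_le (w : T) (i j : 'I_n) : bool :=
  (X i w < X j w) || ((X i w == X j w) && (i <= j)%N).

Definition sorted_idx (w : T) : seq 'I_n := sort (prec_le w) (enum 'I_n).

Definition Nns (s : R) (w : T) : nat :=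
  \max_(k < n.+1 | \sum_(i <- take k (sorted_idx w)) X i w <= s) k.

Definition Ans (s : R) (w : T) : seq 'I_n := take (Nns s w) (sorted_idx w).
Definition SAns (s : R) (w : T) : R := \sum_(i <- Ans s w) X i w.

End Defs.

Definition abs_continuous_fun {R : realType} (F : R -> R) : Prop :=
  forall eps : R, 0 < eps -> exists2 delta : R, 0 < delta &
    forall (m : nat) (a b : 'I_m -> R),
      (forall i, a i <= b i) ->
      (forall i j, i != j -> b i <= a j \/ b j <= a i) ->
      \sum_(i < m) (b i - a i) < delta ->
      \sum_(i < m) `|F (b i) - F (a i)| < eps.

Definition lebesgue_null_n {R : realType} {n : nat} (A : set ('I_n -> R)) : Prop :=
  forall eps : R, 0 < eps -> exists a b : nat -> 'I_n -> R,
    [/\ forall m i, a m i <= b m i,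
        A `<=` \bigcup_m [set x | forall i, a m i <= x i <= b m i]
      & forall N, \sum_(m < N) \prod_(i < n) (b m i - a m i) < eps].

(* (X_1,...,X_n) jointly continuously distributed: the joint law is
   absolutely continuous w.r.t. Lebesgue measure on R^n *)
Definition jointly_continuous {d : measure_display} {T : measurableType d}
  {R : realType} {P : probability T R} {n : nat} (X : 'I_n -> {RV P >-> R}) : Prop :=
  forall A : set ('I_n -> R), lebesgue_null_n A ->
    negligible P [set w | A (fun i => X i w)].

From HB Require Import structures.
From mathcomp Require Import all_boot all_order all_algebra.
From mathcomp Require Import all_classical all_reals all_analysis.
From mathcomp Require Import measurable_realfun.
From mathcomp Require Import lra.
Import Order.TTheory GRing.Theory Num.Theory.
Local Open Scope classical_set_scope.
Local Open Scope ring_scope.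

(* For every outcome w and every t > 0, compare the two sides of
     t N + sum_k X_k 1{X_k <= t}  <=  S_A + sum_k t 1{X_k <= t}
   index by index, according to whether k lies in A(n,s) and whether X_k <= t:
   each of the four cases is immediate, and only |A(n,s)| = N is used.
   Taking expectations and using sum_k E[X_k; X_k <= t] = s gives
   t E N + s <= E S_A + t sum_k F_k(t), i.e. E N <= sum_k F_k(t) - (s - E S_A)/t.
   As also N <= n, E N lies below every convex combination of the two bounds,
   in particular the one with weights p_n and 1 - p_n. *)

Section CountingBound.
Context {R : realDomainType} {n : nat}.

Lemma size_mul_add_sum_le (x : 'I_n -> R) (A : seq 'I_n) (t : R) : uniq A ->
  t * (size A)%:R + \sum_(k < n) x k * (x k <= t)%R%:R
    <= \sum_(i <- A) x i + \sum_(k < n) t * (x k <= t)%R%:R.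
Proof.
move=> uA.
have -> : t * (size A)%:R = \sum_(k < n) t * (k \in A)%:R.
  rewrite -(card_uniqP uA) -mulr_sumr; congr (t * _).
  rewrite -sumr_const big_mkcond /=.
  by apply: eq_bigr => k _; case: (k \in A).
have -> : \sum_(i <- A) x i = \sum_(k < n) (k \in A)%:R * x k.
  rewrite big_uniq // big_mkcond /=; apply: eq_bigr => k _.
  by case: (k \in A); rewrite ?mul1r ?mul0r.
rewrite -!big_split /=; apply: ler_sum => k _.
by case: (k \in A); case: (lerP (x k) t) => /=;
  rewrite ?(mul1r, mul0r, mulr1, mulr0); lra.
Qed.

End CountingBound.

Section ExtendedArithmetic.
Context {R : realDomainType}.
Local Open Scope ereal_scope.

Lemma lee_convex_comb (x a b p : \bar R) :
  a \is a fin_num -> b \is a fin_num -> 0 <= p <= 1 ->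
  x <= a -> x <= b -> x <= p * a + b * (1 - p).
Proof.
case: a b p => [a||] [b||] [p||] // _ _ /andP[];
  rewrite ?leye_eq // !lee_fin => p0 p1.
case: x => [x||] xa xb; [|by rewrite leye_eq in xa|exact: leNye].
change (1 - p%:E) with (1 - p)%:E.
move: xa xb; rewrite -!EFinM -EFinD !lee_fin => xa xb.
have : (p * x <= p * a)%R by rewrite ler_wpM2l.
have : (x * (1 - p) <= b * (1 - p))%R by rewrite ler_wpM2r // subr_ge0.
lra.
Qed.

Lemma fin_num_ge0_le {x : \bar R} {r : R} : 0 <= x -> x <= r%:E -> x \is a fin_num.
Proof. by move=> x0 xr; rewrite ge0_fin_numE // (le_lt_trans xr) ?ltry. Qed.

End ExtendedArithmetic.

Lemma lee_subr_pdivr {R : realFieldType} (x y z : \bar R) (s t : R) :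
  (0 < t)%R ->
  x \is a fin_num -> y \is a fin_num -> z \is a fin_num ->
  (t%:E * x + s%:E <= y + t%:E * z)%E -> (x <= z - (s%:E - y) * t^-1%:E)%E.
Proof.
case: x y z => [x||] [y||] [z||] // t0 _ _ _.
rewrite -!EFinM -!EFinB -!EFinD !lee_fin => h.
have : (s - y) / t <= z - x by rewrite ler_pdivrMr //; lra.
lra.
Qed.

Section FinitePatterns.
Context {d : measure_display} {T : measurableType d}.

Lemma measurable_fun_all (I : Type) (r : seq I) (f : I -> T -> bool) :
  (forall i, measurable_fun setT (f i)) ->
  measurable_fun setT (fun w => all (f ^~ w) r).
Proof.
move=> mf; elim: r => [|i r IH] /=; first exact: measurable_cst.
exact: measurable_and.
Qed.

Lemma measurable_fun_ffun_eq (I : finType) (b : T -> {ffun I -> bool}) :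
  (forall i, measurable_fun setT (fun w => b w i)) ->
  forall m, measurable_fun setT (fun w => b w == m).
Proof.
move=> mb m.
have -> : (fun w => b w == m) = (fun w => all (fun i => b w i == m i) (enum I)).
  apply/funext => w; apply/eqP/allP => [-> //|bm].
  by apply/ffunP => i; apply/eqP/bm; rewrite mem_enum.
apply: (@measurable_fun_all _ _ (fun i w => b w i == m i)) => i.
case: (m i).
  by rewrite (_ : (fun w => _) = (fun w => b w i)) //; apply/funext => w; rewrite eqb_id.
rewrite (_ : (fun w => _) = (fun w => ~~ b w i)); first exact: measurable_neg.
by apply/funext => w; rewrite eqbF_neg.
Qed.

Lemma measurable_fun_dispatch {R : realType} (aT : finType) (b : T -> aT)
    (F : aT -> T -> R) :
  (forall a, measurable_fun setT (fun w => b w == a)) ->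
  (forall a, measurable_fun setT (F a)) ->
  measurable_fun setT (fun w => F (b w) w).
Proof.
move=> mb mF.
have -> : (fun w => F (b w) w) =
    (fun w => \sum_(a : aT) (if b w == a then F a w else 0)).
  apply/funext => w; rewrite (bigD1 (b w)) //= eqxx big1 ?addr0 //.
  by move=> a /negbTE; rewrite eq_sym => ->.
by apply: measurable_sum => a; apply: measurable_fun_ifT.
Qed.

End FinitePatterns.

Section NonnegativeIntegrals.
Context {d : measure_display} {T : measurableType d} {R : realType}
  (mu : measure T R).

Lemma ge0_integral_add_sum (I : Type) (r : seq I) (g : T -> R) (f : I -> T -> R) :
  (forall w, 0 <= g w) -> (forall i w, 0 <= f i w) ->
  measurable_fun setT g -> (forall i, measurable_fun setT (f i)) ->
  (\int[mu]_w (g w + \sum_(i <- r) f i w)%:E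
    = \int[mu]_w (g w)%:E + \sum_(i <- r) \int[mu]_w (f i w)%:E)%E.
Proof.
move=> g0 f0 mg mf.
under eq_integral do rewrite EFinD -sumEFin.
rewrite ge0_integralD //.
- rewrite ge0_integral_sum // => [i|i w _]; first exact/measurable_EFinP.
  by rewrite lee_fin.
- by move=> w _; rewrite lee_fin.
- exact/measurable_EFinP.
- by move=> w _; rewrite sume_ge0 // => i _; rewrite lee_fin.
- by apply: emeasurable_sum => i; exact/measurable_EFinP.
Qed.

Lemma ge0_integralZl_real (f : T -> R) (k : R) :
  0 <= k -> (forall w, 0 <= f w) -> measurable_fun setT f ->
  (\int[mu]_w (k * f w)%:E = k%:E * \int[mu]_w (f w)%:E)%E.
Proof.
move=> k0 f0 mf; under eq_integral do rewrite EFinM.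
rewrite ge0_integralZl_EFin //; first by move=> w _; rewrite lee_fin.
exact/measurable_EFinP.
Qed.

End NonnegativeIntegrals.

Section GreedySelection.
Context {d : measure_display} {T : measurableType d} {R : realType}
  {P : probability T R} {n : nat} (X : 'I_n -> {RV P >-> R}) (s : R).

Let mX k : measurable_fun setT (X k) := measurable_funPT (X k).

Lemma Nns_le w : (Nns X s w <= n)%N.
Proof. by apply/bigmax_leqP => k _; rewrite -ltnS. Qed.

Lemma SAns_ge0 : (forall k w, 0 <= X k w) -> forall w, 0 <= SAns X s w.
Proof. by move=> X0 w; rewrite sumr_ge0. Qed.

Lemma size_Ans w : size (Ans X s w) = Nns X s w.
Proof. by rewrite size_takel // size_sort size_enum_ord Nns_le. Qed.

Lemma uniq_Ans w : uniq (Ans X s w).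
Proof. by rewrite take_uniq // sort_uniq enum_uniq. Qed.

Lemma SAns_le w : 0 <= s -> SAns X s w <= s.
Proof.
move=> s0; have fits0 : \sum_(i <- take (@ord0 n) (sorted_idx X w)) X i w <= s.
  by rewrite take0 big_nil.
by rewrite /SAns /Ans /Nns (bigop.bigmax_eq_arg ord0 fits0); case: arg_maxnP.
Qed.

Lemma Nns_mul_add_le w t :
  t * (Nns X s w)%:R + \sum_(k < n) X k w * (X k w <= t)%R%:R
    <= SAns X s w + \sum_(k < n) t * (X k w <= t)%R%:R.
Proof. by rewrite -size_Ans; exact: size_mul_add_sum_le (uniq_Ans w). Qed.

(* N(n,s) and S_A depend on w only through the comparison pattern of the X_i w,
   which fixes the order pi, and through comparisons of partial sums with s;
   measurability follows by dispatching on these finitely many patterns. *)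

Definition prec_pattern (w : T) : {ffun 'I_n * 'I_n -> bool} :=
  [ffun ij => prec_le X w ij.1 ij.2].

Definition sort_by_pattern (m : {ffun 'I_n * 'I_n -> bool}) : seq 'I_n :=
  sort (fun i j => m (i, j)) (enum 'I_n).

Lemma sorted_idx_pattern w : sorted_idx X w = sort_by_pattern (prec_pattern w).
Proof.
by rewrite /sorted_idx /sort_by_pattern; congr sort; do 2 apply/funext => ?; rewrite ffunE.
Qed.

Lemma measurable_prec_pattern_eq m :
  measurable_fun setT (fun w => prec_pattern w == m).
Proof.
apply: measurable_fun_ffun_eq => ij.
rewrite (_ : (fun w => _) = (fun w => prec_le X w ij.1 ij.2)); last first.
  by apply/funext => w; rewrite ffunE.
apply: measurable_or; first exact: measurable_fun_ltr.
by apply: measurable_and => //; exact: measurable_fun_eqr.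
Qed.

Definition Nns_pattern m (w : T) : nat :=
  \max_(k < n.+1 | \sum_(i <- take k (sort_by_pattern m)) X i w <= s) k.

Lemma measurable_Nns_pattern m :
  measurable_fun setT (fun w => (Nns_pattern m w)%:R : R).
Proof.
pose fits w : {ffun 'I_n.+1 -> bool} :=
  [ffun k : 'I_n.+1 => \sum_(i <- take k (sort_by_pattern m)) X i w <= s].
pose G (b : {ffun 'I_n.+1 -> bool}) (_ : T) : R := (\max_(k < n.+1 | b k) k)%:R.
rewrite (_ : (fun w => _) = (fun w => G (fits w) w)).
  apply: (measurable_fun_dispatch _ fits G) => [|b]; last exact: measurable_cst.
  apply: measurable_fun_ffun_eq => k.
  rewrite (_ : (fun w => _) =
      (fun w => \sum_(i <- take k (sort_by_pattern m)) X i w <= s)).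
    by apply: measurable_fun_ler => //; exact: measurable_sum.
  by apply/funext => w; rewrite ffunE.
by apply/funext => w; congr (_%:R); apply: eq_bigl => k; rewrite ffunE.
Qed.

Lemma measurable_Nns : measurable_fun setT (fun w => (Nns X s w)%:R : R).
Proof.
rewrite (_ : (fun w => _) = (fun w => (Nns_pattern (prec_pattern w) w)%:R)).
  exact: measurable_fun_dispatch measurable_prec_pattern_eq measurable_Nns_pattern.
by apply/funext => w; rewrite /Nns sorted_idx_pattern.
Qed.

Lemma measurable_Nns_lt m : measurable [set w | (Nns X s w < m)%N].
Proof.
rewrite (_ : [set w | _] = (fun w => (Nns X s w)%:R : R) @^-1` `]-oo, m%:R[).
  rewrite -[X in measurable X]setTI.
  by apply: measurable_Nns => //; exact: measurable_itv.
by apply/seteqP; split => w /=; rewrite in_itv /= ltr_nat.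
Qed.

Lemma measurable_SAns : measurable_fun setT (SAns X s).
Proof.
pose b w := (prec_pattern w, inord (Nns X s w) : 'I_n.+1).
pose F (mk : {ffun 'I_n * 'I_n -> bool} * 'I_n.+1) w :=
  \sum_(i <- take mk.2 (sort_by_pattern mk.1)) X i w.
rewrite (_ : SAns X s = (fun w => F (b w) w)).
  apply: (measurable_fun_dispatch _ b F) => [[m k]|mk]; last exact: measurable_sum.
  rewrite (_ : (fun w => _) = (fun w =>
      (prec_pattern w == m) && ((Nns X s w)%:R == (k : nat)%:R :> R))).
    apply: measurable_and; first exact: measurable_prec_pattern_eq.
    by apply: measurable_fun_eqr => //; exact: measurable_Nns.
  apply/funext => w; rewrite /b xpair_eqE eqr_nat -val_eqE /= inordK //.
  by rewrite ltnS Nns_le.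
apply/funext => w; rewrite /SAns /Ans /b /F /= inordK ?ltnS ?Nns_le //.
by rewrite sorted_idx_pattern.
Qed.

Lemma measurable_indic_le k t :
  measurable_fun setT (fun w => (X k w <= t)%R%:R : R).
Proof.
rewrite (_ : (fun w => _) = (fun w => if X k w <= t then 1 else 0)).
  by apply: measurable_fun_ifT => //; exact: measurable_fun_ler.
by apply/funext => w; case: ifP.
Qed.

Local Open Scope ereal_scope.

Lemma integral_indic_le_cdf k t :
  \int[P]_w ((X k w <= t)%R%:R)%:E = cdf (X k) t.
Proof.
have mXt : measurable (X k @^-1` `]-oo, t]).
  by rewrite -[X in measurable X]setTI; apply: mX => //; exact: measurable_itv.
rewrite -[RHS]/(P (X k @^-1` `]-oo, t])) -[in RHS](setIT (X k @^-1` _)).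
rewrite -integral_indic //; apply: eq_integral => w _.
by rewrite indicE /preimage /= mem_setE.
Qed.

Lemma integral_distribution_itv0 k t : (forall w, 0 <= X k w)%R ->
  \int[distribution P (X k)]_(x in `[0%R, t]) x%:E
    = \int[P]_w (X k w * (X k w <= t)%R%:R)%:E.
Proof.
move=> X0; rewrite integral_mkcond ge0_integral_distribution //.
- apply: eq_integral => w _ /=.
  rewrite patchE mem_setE in_itv /= X0 /=.
  by case: (X k w <= t)%R; rewrite ?mulr1 ?mulr0.
- apply/(measurable_restrictT _ _).1; first exact: measurable_itv.
  exact: EFin_measurable.
- move=> x; rewrite patchE mem_setE in_itv /=.
  by case: ifP => [/andP[x0 _]|_] //; rewrite lee_fin.
Qed.

Lemma expectation_Nns_bounds : 0 <= 'E_P[fun w => (Nns X s w)%:R] <= n%:R%:E.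
Proof.
rewrite expectation_ge0 //= -(expectation_cst P n%:R).
apply: expectation_le => //; first exact: measurable_Nns.
by apply: aeW => w; rewrite ler_nat Nns_le.
Qed.

Lemma expectation_SAns_bounds : (0 <= s)%R -> (forall k w, 0 <= X k w)%R ->
  0 <= 'E_P[SAns X s] <= s%:E.
Proof.
move=> s0 X0; have SAns0 := SAns_ge0 X0.
rewrite expectation_ge0 //= -(expectation_cst P s).
apply: expectation_le => //; first exact: measurable_SAns.
by apply: aeW => w; exact: SAns_le.
Qed.

Lemma expectation_Nns_le t : (0 < t)%R -> (forall k w, 0 <= X k w)%R ->
  t%:E * 'E_P[fun w => (Nns X s w)%:R]
    + \sum_(k < n) \int[P]_w (X k w * (X k w <= t)%R%:R)%:E
  <= 'E_P[SAns X s] + t%:E * \sum_(k < n) cdf (X k) t.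
Proof.
move=> t0 X0; have SAns0 := SAns_ge0 X0.
have mXt k : measurable_fun setT (fun w => X k w * (X k w <= t)%R%:R)%R.
  exact: measurable_funM (mX k) (measurable_indic_le k t).
have mtN : measurable_fun setT (fun w => t * (Nns X s w)%:R)%R.
  exact: measurable_funM (measurable_cst t) measurable_Nns.
have mtI k : measurable_fun setT (fun w => t * (X k w <= t)%R%:R)%R.
  exact: measurable_funM (measurable_cst t) (measurable_indic_le k t).
have tI0 k w : (0 <= t * (X k w <= t)%R%:R)%R by rewrite mulr_ge0 // ltW.
have XI0 k w : (0 <= X k w * (X k w <= t)%R%:R)%R by rewrite mulr_ge0.
have tN0 w : (0 <= t * (Nns X s w)%:R)%R by rewrite mulr_ge0 // ltW.
have -> : t%:E * \sum_(k < n) cdf (X k) t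
    = \sum_(k < n) \int[P]_w (t * (X k w <= t)%R%:R)%:E.
  rewrite ge0_sume_distrr; last by move=> k _; exact: cdf_ge0.
  apply: eq_bigr => k _.
  rewrite ge0_integralZl_real ?integral_indic_le_cdf ?(ltW t0) //.
  exact: measurable_indic_le.
rewrite expectation.unlock -ge0_integralZl_real ?(ltW t0) //;
  last exact: measurable_Nns.
rewrite -!ge0_integral_add_sum //; last exact: measurable_SAns.
apply: ge0_le_integral => //.
- by move=> w _; rewrite lee_fin addr_ge0 ?sumr_ge0.
- by apply/measurable_EFinP; apply: measurable_funD => //; exact: measurable_sum.
- apply/measurable_EFinP; apply: measurable_funD; first exact: measurable_SAns.
  exact: measurable_sum.
- by move=> w _; rewrite lee_fin Nns_mul_add_le.
Qed.

End GreedySelection.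

Theorem mainTheorem2 (d : measure_display) (T : measurableType d) (R : realType)
  (P : probability T R) (n : nat) (X : 'I_n -> {RV P >-> R}) (s t : R) :
  (0 < n)%N ->
  (forall k w, 0 < X k w) ->
  jointly_continuous X ->
  (forall k, abs_continuous_fun (fun x => fine (cdf (X k) x))) ->
  0 < s ->
  0 < t ->
  (\sum_(k < n) \int[distribution P (X k)]_(x in `[0%R, t]%classic) x%:E = s%:E)%E ->
  (forall t' : R, 0 < t' ->
     (\sum_(k < n) \int[distribution P (X k)]_(x in `[0%R, t']%classic) x%:E = s%:E)%E ->
     t' = t) ->
  let p := P [set w | (Nns X s w < n)%N] in
  ('E_P[fun w => (Nns X s w)%:R]
    <= p * (\sum_(k < n) cdf (X k) t - (s%:E - 'E_P[SAns X s]) * (t^-1)%:E)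
       + (n%:R)%:E * (1 - p))%E.
Proof.
move=> _ Xpos _ _ s0 t0 mean_t _; cbv zeta.
have X0 k w : 0 <= X k w by exact: ltW.
have truncated_means :
    (\sum_(k < n) \int[P]_w (X k w * (X k w <= t)%R%:R)%:E = s%:E)%E.
  by rewrite -mean_t; apply: eq_bigr => k _; rewrite integral_distribution_itv0.
have /andP[EN0 ENn] := expectation_Nns_bounds X s.
have /andP[ES0 ESs] := expectation_SAns_bounds X s (ltW s0) X0.
have ES_fin := fin_num_ge0_le ES0 ESs.
have cdf_fin : (\sum_(k < n) cdf (X k) t)%E \is a fin_num.
  apply/sum_fin_numP => k _ _.
  exact: fin_num_ge0_le (cdf_ge0 _ _) (cdf_le1 _ _).
apply: lee_convex_comb => //.
- by rewrite fin_numB cdf_fin fin_numM // fin_numB ES_fin.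
- by rewrite measure_ge0 probability_le1 //; exact: measurable_Nns_lt.
apply: lee_subr_pdivr => //; first exact: fin_num_ge0_le EN0 ENn.
by rewrite -truncated_means expectation_Nns_le.
Qed.
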